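(* Let $(\mathbb{C},P)$ be an extensional, cauchy-complete regular doctrine with full comprehensions. Then a morphism $f:A\to B$ of $\mathbb{C}$ is a monomorphism if and only if it is a comprehension of some formula $\beta\in P(B)$ (i.e. $f=\lfloor\beta\rfloor\circ k$ for some isomorphism $k$; one may take $\beta=\exists_f\top_A$).
   Context: A regular doctrine is $(\mathbb{C},P)$, $\mathbb{C}$ non-empty with binary products, $P:\mathbb{C}^{op}\to$ inf-semilattices, with $f^*=P(f)$ having left adjoints $\exists_f$ satisfying Beck–Chevalley and Frobenius reciprocity; $\delta_A=\exists_{\langle id_A,id_A\rangle}\top_A$. Full comprehension of $\alpha\in P(A)$: $\lfloor\alpha\rfloor:X\to A$ with $\lfloor\alpha\rfloor^*\alpha=\top_X$, universal among arrows $f$ with $f^*\alpha=\top$ (unique factorization), and with $\lfloor\alpha\rfloor^*\alpha\le\lfloor\alpha\rfloor^*\beta$ iff $\alpha\le\beta$. Extensional: for parallel $f,g:X\to A$, $f=g$ iff $\top_X\le\langle f,g\rangle^*\delta_A$. A formula $F\in P(Y\times A)$ is functional from $Y$ to $A$ if $\top_Y\le\exists_{\pi_1}F$ (where $\pi_1:Y\times A\to Y$) and $\langle\pi_1,\pi_2\rangle^*F\wedge\langle\pi_1,\pi_3\rangle^*F\le\langle\pi_2,\pi_3\rangle^*\delta_A$ in $P(Y\times A\times A)$. An object $A$ is cauchy-complete if for every $Y$ and every $F$ functional from $Y$ to $A$ there is $f:Y\to A$ with $(f\times id_A)^*\delta_A=F$; the doctrine is cauchy-complete if all objects are. *)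

Set Implicit Arguments.
Unset Strict Implicit.

Record Cat := {
  Obj :> Type;
  Hom : Obj -> Obj -> Type;
  idm : forall A, Hom A A;
  comp : forall A B C, Hom B C -> Hom A B -> Hom A C;
  comp_id_l : forall A B (f : Hom A B), comp (idm B) f = f;
  comp_id_r : forall A B (f : Hom A B), comp f (idm A) = f;
  comp_assoc : forall A B C D (h : Hom C D) (g : Hom B C) (f : Hom A B),
      comp h (comp g f) = comp (comp h g) f
}.
Arguments Hom {c} _ _.
Arguments idm {c} _.
Arguments comp {c A B C} _ _.

Record BinProducts (C : Cat) := {
  prd : C -> C -> C;
  pr1 : forall A B, Hom (prd A B) A;
  pr2 : forall A B, Hom (prd A B) B;
  pair : forall X A B, Hom X A -> Hom X B -> Hom X (prd A B);
  pair_pr1 : forall X A B (f : Hom X A) (g : Hom X B), comp (pr1 A B) (pair f g) = f;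
  pair_pr2 : forall X A B (f : Hom X A) (g : Hom X B), comp (pr2 A B) (pair f g) = g;
  pair_uniq : forall X A B (f : Hom X A) (g : Hom X B) (h : Hom X (prd A B)),
      comp (pr1 A B) h = f -> comp (pr2 A B) h = g -> h = pair f g
}.
Arguments prd {C} _ _ _.
Arguments pr1 {C} _ _ _.
Arguments pr2 {C} _ _ _.
Arguments pair {C} _ {X A B} _ _.

(* Pullback squares:   X' --g'--> X
                        |f'        |f
                        v          v
                        Y' --g---> Y      with f o g' = g o f' *)
Definition is_pullback {C : Cat} {X' X Y' Y : C}
  (g' : Hom X' X) (f' : Hom X' Y') (f : Hom X Y) (g : Hom Y' Y) : Prop :=
  comp f g' = comp g f' /\
  forall Z (u : Hom Z X) (v : Hom Z Y'), comp f u = comp g v ->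
    exists w : Hom Z X', (comp g' w = u /\ comp f' w = v) /\
      forall w' : Hom Z X', comp g' w' = u -> comp f' w' = v -> w' = w.

Definition is_mono {C : Cat} {A B : C} (f : Hom A B) : Prop :=
  forall X (g h : Hom X A), comp f g = comp f h -> g = h.

Definition is_iso {C : Cat} {A B : C} (f : Hom A B) : Prop :=
  exists g : Hom B A, comp g f = idm A /\ comp f g = idm B.

Record RegDoctrine (C : Cat) (Pr : BinProducts C) := {
  P : C -> Type;
  le : forall A, P A -> P A -> Prop;
  le_refl : forall A (a : P A), le a a;
  le_trans : forall A (a b c : P A), le a b -> le b c -> le a c;
  le_antisym : forall A (a b : P A), le a b -> le b a -> a = b;
  top : forall A, P A;
  top_max : forall A (a : P A), le a (top A);
  meet : forall A, P A -> P A -> P A;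
  meet_lb1 : forall A (a b : P A), le (meet a b) a;
  meet_lb2 : forall A (a b : P A), le (meet a b) b;
  meet_glb : forall A (a b c : P A), le c a -> le c b -> le c (meet a b);
  reidx : forall A B, Hom A B -> P B -> P A;
  reidx_mono : forall A B (f : Hom A B) (a b : P B), le a b -> le (reidx f a) (reidx f b);
  reidx_top : forall A B (f : Hom A B), reidx f (top B) = top A;
  reidx_meet : forall A B (f : Hom A B) (a b : P B),
      reidx f (meet a b) = meet (reidx f a) (reidx f b);
  reidx_id : forall A (a : P A), reidx (idm A) a = a;
  reidx_comp : forall A B D (f : Hom A B) (g : Hom B D) (a : P D),
      reidx (comp g f) a = reidx f (reidx g a);
  ex : forall A B, Hom A B -> P A -> P B;
  ex_adj : forall A B (f : Hom A B) (a : P A) (b : P B),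
      le (ex f a) b <-> le a (reidx f b);
  beck_chevalley : forall X' X Y' Y (g' : Hom X' X) (f' : Hom X' Y')
      (f : Hom X Y) (g : Hom Y' Y),
      is_pullback g' f' f g ->
      forall a : P X, reidx g (ex f a) = ex f' (reidx g' a);
  frobenius : forall A B (f : Hom A B) (a : P A) (b : P B),
      ex f (meet a (reidx f b)) = meet (ex f a) b
}.
Arguments P {C Pr} _ _.
Arguments le {C Pr} _ {A} _ _.
Arguments top {C Pr} _ _.
Arguments meet {C Pr} _ {A} _ _.
Arguments reidx {C Pr} _ {A B} _ _.
Arguments ex {C Pr} _ {A B} _ _.

Section DoctrineNotions.
Variables (C : Cat) (Pr : BinProducts C) (D : RegDoctrine Pr).

Definition delta (A : C) : P D (prd Pr A A) :=
  ex D (pair Pr (idm A) (idm A)) (top D A).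

Definition is_full_comprehension (A : C) (alpha : P D A) (X : C) (c : Hom X A) : Prop :=
  reidx D c alpha = top D X /\
  (forall Y (f : Hom Y A), le D (top D Y) (reidx D f alpha) ->
     exists h : Hom Y X, comp c h = f /\
       forall h' : Hom Y X, comp c h' = f -> h' = h) /\
  (forall beta : P D A,
     le D (reidx D c alpha) (reidx D c beta) <-> le D alpha beta).

Definition has_full_comprehensions : Prop :=
  forall (A : C) (alpha : P D A), exists (X : C) (c : Hom X A),
    is_full_comprehension alpha c.

Definition extensional : Prop :=
  forall (X A : C) (f g : Hom X A),
    f = g <-> le D (top D X) (reidx D (pair Pr f g) (delta A)).

Definition functional (Y A : C) (F : P D (prd Pr Y A)) : Prop :=
  let YAA := prd Pr (prd Pr Y A) A in
  let p1 : Hom YAA Y := comp (pr1 Pr Y A) (pr1 Pr (prd Pr Y A) A) in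
  let p2 : Hom YAA A := comp (pr2 Pr Y A) (pr1 Pr (prd Pr Y A) A) in
  let p3 : Hom YAA A := pr2 Pr (prd Pr Y A) A in
  le D (top D Y) (ex D (pr1 Pr Y A) F) /\
  le D (meet D (reidx D (pair Pr p1 p2) F) (reidx D (pair Pr p1 p3) F))
       (reidx D (pair Pr p2 p3) (delta A)).

Definition cauchy_complete_obj (A : C) : Prop :=
  forall (Y : C) (F : P D (prd Pr Y A)), functional F ->
    exists f : Hom Y A,
      reidx D (pair Pr (comp f (pr1 Pr Y A)) (pr2 Pr Y A)) (delta A) = F.

Definition cauchy_complete : Prop := forall A : C, cauchy_complete_obj A.

End DoctrineNotions.

From Stdlib Require Import Setoid.
Set Implicit Arguments.
Unset Strict Implicit.

(* Comprehensions are monic by the uniqueness of their factorizations, and a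
   comprehension precomposed with an iso stays monic.  Conversely, for a mono
   f : A -> B take beta := ex_f top_A and its comprehension c : X -> B; f
   factors as f = c o k with k monic.  Because c is monic, Beck-Chevalley on
   its (trivial) kernel pair gives c^* ex_c = id, whence ex_k top_A = top_X:
   k is "surjective" in the doctrine.  The heart of the proof is that a monic,
   surjective k : A -> X is an isomorphism: the formula "x = k a" on X x A is
   functional from X to A, so cauchy-completeness yields g : X -> A whose graph
   it is, and extensionality shows g is inverse to k.  Functionality is checked
   on generalized elements: with full comprehensions an entailment holds as
   soon as it holds at every arrow into the context, and by extensionality an
   equality formula holds at an arrow exactly when the two arrows agree. *)

Lemma pair_comp (C : Cat) (Pr : BinProducts C) (Z X A B : C)
  (g : Hom X A) (h : Hom X B) (m : Hom Z X) :
  comp (pair Pr g h) m = pair Pr (comp g m) (comp h m).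
Proof.
  apply pair_uniq.
  - rewrite comp_assoc, pair_pr1; reflexivity.
  - rewrite comp_assoc, pair_pr2; reflexivity.
Qed.

Lemma mono_comp (C : Cat) (A B E : C) (k : Hom A B) (c : Hom B E) :
  is_mono c -> is_mono k -> is_mono (comp c k).
Proof.
  intros Hc Hk Z u v Huv. apply Hk, Hc.
  rewrite !comp_assoc. exact Huv.
Qed.

Lemma mono_cancel (C : Cat) (A B E : C) (k : Hom A B) (c : Hom B E) :
  is_mono (comp c k) -> is_mono k.
Proof.
  intros Hck Z u v Huv. apply Hck.
  rewrite <- !comp_assoc, Huv. reflexivity.
Qed.

Lemma iso_mono (C : Cat) (A B : C) (k : Hom A B) : is_iso k -> is_mono k.
Proof.
  intros [g [Hgk _]] Z u v Huv.
  rewrite <- (comp_id_l u), <- (comp_id_l v), <- Hgk, <- !comp_assoc, Huv.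
  reflexivity.
Qed.

Section RegularDoctrine.
Variables (C : Cat) (Pr : BinProducts C) (D : RegDoctrine Pr).

Lemma ex_unit (A B : C) (f : Hom A B) (a : P D A) :
  le D a (reidx D f (ex D f a)).
Proof. apply ex_adj, le_refl. Qed.

Lemma ex_mono (A B : C) (f : Hom A B) (a b : P D A) :
  le D a b -> le D (ex D f a) (ex D f b).
Proof. intro H. apply ex_adj. eapply le_trans; [exact H | apply ex_unit]. Qed.

(* Left adjoints compose, as their right adjoints do. *)
Lemma ex_comp (A B E : C) (h : Hom A B) (g : Hom B E) (a : P D A) :
  ex D (comp g h) a = ex D g (ex D h a).
Proof.
  apply le_antisym.
  - apply ex_adj. rewrite reidx_comp.
    eapply le_trans; [apply (ex_unit h) | apply reidx_mono, ex_unit].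
  - apply ex_adj, ex_adj. rewrite <- reidx_comp. apply ex_unit.
Qed.

Lemma ex_id (A : C) (a : P D A) : ex D (idm A) a = a.
Proof.
  apply le_antisym.
  - apply ex_adj. rewrite reidx_id. apply le_refl.
  - pose proof (ex_unit (idm A) a) as H. rewrite reidx_id in H. exact H.
Qed.

(* For a mono c the kernel pair is trivial, so Beck-Chevalley gives
   c^* (ex_c a) = a. *)
Lemma mono_reidx_ex (X B : C) (c : Hom X B) (a : P D X) :
  is_mono c -> reidx D c (ex D c a) = a.
Proof.
  intro Hm.
  assert (Hpb : is_pullback (idm X) (idm X) c c).
  { split; [reflexivity |].
    intros Z u v Huv. exists u. split.
    - split; [apply comp_id_l |]. rewrite comp_id_l. apply Hm, Huv.
    - intros w' H1 _. rewrite comp_id_l in H1. exact H1. }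
  rewrite (beck_chevalley (r:=D) Hpb), reidx_id. apply ex_id.
Qed.

(* Full comprehensions are monic: factorizations through them are unique. *)
Lemma comprehension_mono (B X : C) (beta : P D B) (c : Hom X B) :
  is_full_comprehension beta c -> is_mono c.
Proof.
  intros [Hc1 [Hc2 _]] Z g h E.
  assert (Hg : le D (top D Z) (reidx D (comp c g) beta)).
  { rewrite reidx_comp, Hc1, reidx_top. apply le_refl. }
  destruct (Hc2 Z (comp c g) Hg) as [w [_ Huniq]].
  rewrite (Huniq g eq_refl). symmetry. apply Huniq. symmetry. exact E.
Qed.

Definition holds (Z Y : C) (m : Hom Z Y) (phi : P D Y) : Prop :=
  le D (top D Z) (reidx D m phi).

Lemma holds_reidx (Z Y W : C) (m : Hom Z Y) (h : Hom Y W) (phi : P D W) :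
  holds m (reidx D h phi) <-> holds (comp h m) phi.
Proof. unfold holds. rewrite reidx_comp. reflexivity. Qed.

Lemma holds_meet (Z Y : C) (m : Hom Z Y) (a b : P D Y) :
  holds m (meet D a b) -> holds m a /\ holds m b.
Proof.
  intro H. split; eapply le_trans; try exact H; apply reidx_mono;
    [apply meet_lb1 | apply meet_lb2].
Qed.

(* With full comprehensions, entailment is detected by generalized elements:
   test at the comprehension of the antecedent. *)
Lemma entails_pointwise (Hcomp : has_full_comprehensions D)
  (Y : C) (phi psi : P D Y) :
  (forall Z (m : Hom Z Y), holds m phi -> holds m psi) -> le D phi psi.
Proof.
  intro H. destruct (Hcomp Y phi) as [Z [m [H1 [_ H3]]]].
  apply H3. rewrite H1. apply H. unfold holds. rewrite H1. apply le_refl.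
Qed.

Section Extensional.
Hypothesis Hext : extensional D.

Lemma holds_eq (Z Y A : C) (m : Hom Z Y) (u v : Hom Y A) :
  holds m (reidx D (pair Pr u v) (delta D A)) <-> comp u m = comp v m.
Proof.
  rewrite holds_reidx, pair_comp. unfold holds. symmetry. apply Hext.
Qed.

Definition graph (Y A : C) (h : Hom Y A) : P D (prd Pr Y A) :=
  reidx D (pair Pr (comp h (pr1 Pr Y A)) (pr2 Pr Y A)) (delta D A).

Definition cograph (A X : C) (k : Hom A X) : P D (prd Pr X A) :=
  reidx D (pair Pr (pr1 Pr X A) (comp k (pr2 Pr X A))) (delta D X).

Lemma holds_graph (Z Y A : C) (h : Hom Y A) (y : Hom Z Y) (a : Hom Z A) :
  holds (pair Pr y a) (graph h) <-> comp h y = a.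
Proof.
  unfold graph. rewrite holds_eq, <- comp_assoc, pair_pr1, pair_pr2.
  reflexivity.
Qed.

Lemma holds_cograph (Z A X : C) (k : Hom A X) (x : Hom Z X) (a : Hom Z A) :
  holds (pair Pr x a) (cograph k) <-> x = comp k a.
Proof.
  unfold cograph. rewrite holds_eq, <- comp_assoc, pair_pr1, pair_pr2.
  reflexivity.
Qed.

(* For k monic and surjective, "x = k a" is functional from X to A:
   surjectivity gives totality and injectivity gives single-valuedness. *)
Lemma cograph_functional (Hcomp : has_full_comprehensions D)
  (A X : C) (k : Hom A X) :
  is_mono k -> le D (top D X) (ex D k (top D A)) -> functional (cograph k).
Proof.
  intros Hk Hsurj. split.
  - eapply le_trans; [exact Hsurj |].
    replace (ex D k (top D A))
      with (ex D (comp (pr1 Pr X A) (pair Pr k (idm A))) (top D A))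
      by (rewrite pair_pr1; reflexivity).
    rewrite ex_comp. apply ex_mono, ex_adj.
    change (holds (pair Pr k (idm A)) (cograph k)).
    apply holds_cograph. symmetry. apply comp_id_r.
  - apply (entails_pointwise Hcomp). intros Z m Hm.
    apply holds_meet in Hm as [H12 H13].
    rewrite holds_reidx, pair_comp, holds_cograph in H12, H13.
    apply holds_eq, Hk. rewrite <- H12, <- H13. reflexivity.
Qed.

(* Unique choice: a monic surjective arrow is invertible, its inverse being
   the arrow whose graph is the converse graph of k. *)
Lemma mono_surjective_iso (Hcomp : has_full_comprehensions D)
  (Hcc : cauchy_complete D) (A X : C) (k : Hom A X) :
  is_mono k -> le D (top D X) (ex D k (top D A)) -> is_iso k.
Proof.
  intros Hk Hsurj.
  destruct (Hcc A X (cograph k) (cograph_functional Hcomp Hk Hsurj))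
    as [g Hg].
  change (graph g = cograph k) in Hg.
  exists g. split.
  - apply (holds_graph g k (idm A)). rewrite Hg.
    apply holds_cograph. symmetry. apply comp_id_r.
  - symmetry. apply (holds_cograph k (idm X) g). rewrite <- Hg.
    apply holds_graph. apply comp_id_r.
Qed.

End Extensional.

(* The factor k of a mono f through the comprehension c of ex_f top is
   surjective: ex_k top = c^* ex_c ex_k top = c^* ex_f top = top. *)
Lemma factor_surjective (A B X : C) (f : Hom A B) (c : Hom X B) (k : Hom A X) :
  is_full_comprehension (ex D f (top D A)) c -> f = comp c k ->
  le D (top D X) (ex D k (top D A)).
Proof.
  intros Hc Hf.
  rewrite <- (mono_reidx_ex (ex D k (top D A)) (comprehension_mono Hc)),
    <- ex_comp, <- Hf.
  destruct Hc as [Hc1 _]. rewrite Hc1. apply le_refl.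
Qed.

End RegularDoctrine.

Theorem lemma5p1 (C : Cat) (Pr : BinProducts C) (D : RegDoctrine Pr)
  (Cne : inhabited (Obj C))
  (Hext : extensional D) (Hcc : cauchy_complete D)
  (Hcomp : has_full_comprehensions D)
  (A B : C) (f : Hom A B) :
  is_mono f <->
  exists (beta : P D B) (X : C) (c : Hom X B) (k : Hom A X),
    is_full_comprehension beta c /\ is_iso k /\ f = comp c k.
Proof.
  split.
  - intro Hf.
    destruct (Hcomp B (ex D f (top D A))) as [X [c Hc]].
    destruct (proj1 (proj2 Hc) A f (ex_unit f (top D A))) as [k [Hck _]].
    assert (Hk : is_mono k) by (apply (mono_cancel (c:=c)); rewrite Hck; exact Hf).
    exists (ex D f (top D A)), X, c, k. split; [exact Hc | split].
    + apply (mono_surjective_iso Hext Hcomp Hcc Hk).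
      apply (factor_surjective Hc). symmetry. exact Hck.
    + symmetry. exact Hck.
  - intros [beta [X [c [k [Hc [Hk ->]]]]]].
    apply mono_comp; [exact (comprehension_mono Hc) | exact (iso_mono Hk)].
Qed.
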